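(* For an integer $m\ge0$ let $\mathbf{S}_m=\{1,\dots,m\}^2$, and let $B_{\mathbf{S}}(m,k)$ be the number of $k$-element subsets of $\mathbf{S}_m$ no two distinct elements $(i,j),(i',j')$ of which satisfy $i-j=i'-j'$ or $i+j=i'+j'$ (nonattacking placements of $k$ bishops). Then for all integers $m,k\ge 0$, $$B_{\mathbf{S}}(m,k)=\sum_{j=0}^{k}\sum_{i=0}^{j}\binom{\lfloor m/2\rfloor}{i}\left\{ {m-i \atop m-j}\right\}\sum_{l=0}^{k-j}\binom{\lceil m/2\rceil}{l}\left\{ {m-l \atop m-k+j}\right\}.$$
   Context: The Stirling numbers of the second kind $\left\{ {n \atop r}\right\}$ are used in the extended sense for all integers $n,r$: for $n,r\ge0$ they are the usual ones; for $n,r\le 0$, $\left\{ {n \atop r}\right\}=\left[{-r \atop -n}\right]$, the unsigned Stirling number of the first kind; and they are $0$ when one of $n,r$ is positive and the other negative (Knuth's extension, satisfying $\left\{ {n \atop r}\right\}=r\left\{ {n-1 \atop r}\right\}+\left\{ {n-1 \atop r-1}\right\}$ for all integers). *)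

From mathcomp Require Import all_boot all_order all_algebra.
Set Implicit Arguments. Unset Strict Implicit. Unset Printing Implicit Defensive.
Import GRing.Theory Num.Theory.

Fixpoint stirling2 (n k : nat) : nat :=
  match n, k with
  | 0, 0 => 1
  | 0, _.+1 => 0
  | _.+1, 0 => 0
  | n'.+1, k'.+1 => k'.+1 * stirling2 n' k'.+1 + stirling2 n' k'
  end.

Fixpoint stirling1 (n k : nat) : nat :=
  match n, k with
  | 0, 0 => 1
  | 0, _.+1 => 0
  | _.+1, 0 => 0
  | n'.+1, k'.+1 => n' * stirling1 n' k'.+1 + stirling1 n' k'
  end.

(* Knuth's extension of {n \atop r} to all integers n, r:
   usual for n, r >= 0; [-r \atop -n] for n, r <= 0; 0 otherwise. *)
Definition stirling2Z (n r : int) : nat :=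
  match n, r with
  | Posz a, Posz b => stirling2 a b
  | Negz a, Negz b => stirling1 b.+1 a.+1
  | Posz 0, Negz b => stirling1 b.+1 0
  | Negz a, Posz 0 => stirling1 0 a.+1
  | _, _ => 0
  end.

(* The board S_m = {1..m}^2, encoded as 'I_m * 'I_m with (i,j) standing for (i+1,j+1). *)
Definition diff_coord (m : nat) (x : 'I_m * 'I_m) : int :=
  ((x.1 : nat).+1)%:Z - ((x.2 : nat).+1)%:Z.
Definition sum_coord (m : nat) (x : 'I_m * 'I_m) : int :=
  ((x.1 : nat).+1)%:Z + ((x.2 : nat).+1)%:Z.

Definition nonattacking (m : nat) (A : {set 'I_m * 'I_m}) : bool :=
  [forall x in A, forall y in A,
     (x != y) ==> ((diff_coord x != diff_coord y) && (sum_coord x != sum_coord y))].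

Definition bishopsS (m k : nat) : nat :=
  #|[set A : {set 'I_m * 'I_m} | (#|A| == k) && nonattacking A]|.

From mathcomp Require Import all_boot all_order all_algebra.
From mathcomp Require Import zify.

Set Implicit Arguments. Unset Strict Implicit. Unset Printing Implicit Defensive.

(* Read bishops as rooks whose columns are the diagonals and whose rows are the
   anti-diagonals. Squares of different colours share neither, so B_S(m, k) is the
   convolution of the counts for the two colour classes. Listing the anti-diagonals
   of one colour by length, the t-th has t or t + 1 squares and its diagonals
   contain those of all earlier ones: the colour class is a Ferrers board. Adding a
   row of length l to such a board P gives r_(k+1)(P u R) = r_(k+1)(P) + (l - k) r_k(P),
   and sum_i C(h, i) S(n - i, n - k) satisfies the same recurrence, with h the number
   of rows of length t + 1. *)

Section RookPlacements.
Variables (T : finType) (U : eqType) (col row : T -> U).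

Definition rook_placement (A : {set T}) : bool :=
  [forall x in A, forall y in A, (x != y) ==> (col x != col y) && (row x != row y)].

Definition placements (P : {set T}) (k : nat) : {set {set T}} :=
  [set A : {set T} | [&& A \subset P, #|A| == k & rook_placement A]].

Definition rook_number (P : {set T}) (k : nat) : nat := #|placements P k|.

Lemma rook_placementP (A : {set T}) :
  reflect {in A &, forall x y, x != y -> col x != col y /\ row x != row y}
          (rook_placement A).
Proof.
apply: (iffP forall_inP) => [placed x y xA yA nxy | placed x xA].
  by have /forall_inP/(_ y yA)/implyP/(_ nxy)/andP := placed x xA.
by apply/forall_inP => y yA; apply/implyP => /(placed x y xA yA) [-> ->].
Qed.

Lemma rook_placementS (A B : {set T}) :
  B \subset A -> rook_placement A -> rook_placement B.
Proof.
move=> /subsetP sBA /rook_placementP placed; apply/rook_placementP => x y xB yB.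
exact: placed (sBA x xB) (sBA y yB).
Qed.

Lemma rook_placement1 x : rook_placement [set x].
Proof. by apply/rook_placementP => y z; rewrite !inE => /eqP-> /eqP->; rewrite eqxx. Qed.

Lemma rook_placementU (A B : {set T}) :
    rook_placement A -> rook_placement B ->
    (forall x y, x \in A -> y \in B -> col x != col y /\ row x != row y) ->
  rook_placement (A :|: B).
Proof.
move=> /rook_placementP placedA /rook_placementP placedB cross.
apply/rook_placementP => x y; rewrite !inE => /orP[xA|xB] /orP[yA|yB] nxy.
- exact: placedA.
- exact: cross.
- by have [] := cross y x yA xB; split; rewrite eq_sym.
- exact: placedB.
Qed.

Lemma rook_placement_col_inj (A : {set T}) :
  rook_placement A -> {in A &, injective col}.
Proof.
move=> /rook_placementP placed x y xA yA; apply: contra_eq => nxy.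
by have [] := placed x y xA yA nxy.
Qed.

Lemma rook_number0 P : rook_number P 0 = 1.
Proof.
rewrite /rook_number (_ : placements P 0 = [set set0]) ?cards1 //.
apply/setP => A; rewrite !inE cards_eq0; case: eqP => [->|_]; rewrite ?andbF //.
by rewrite sub0set; apply/rook_placementP => x; rewrite inE.
Qed.

Lemma rook_number_set0 k : rook_number set0 k = (k == 0).
Proof.
case: k => [|k]; first exact: rook_number0.
apply/eqP; rewrite cards_eq0; apply/eqP/setP => A; rewrite !inE subset0.
by case: eqP => [->|]; rewrite ?cards0.
Qed.

End RookPlacements.

Section AddRow.
Variables (T : finType) (U : eqType) (col row : T -> U) (P R : {set T}).
Hypothesis row_constR : {in R &, forall x y, row x = row y}.
Hypothesis col_injR : {in R &, injective col}.
Hypothesis row_freshR : forall x y, x \in R -> y \in P -> row x != row y.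
Hypothesis col_coverR : forall y, y \in P -> exists2 x, x \in R & col x = col y.

Local Notation placements := (placements col row).
Local Notation rook_number := (rook_number col row).

Lemma new_row_notin x : x \in R -> x \notin P.
Proof. by move=> xR; apply/negP => /(row_freshR xR); rewrite eqxx. Qed.

Definition free_cells (B : {set T}) : {set T} :=
  [set x in R | [forall y in B, col y != col x]].

Definition partner (y : T) : T := odflt y [pick x in R | col x == col y].

Lemma partnerP y : y \in P -> partner y \in R /\ col (partner y) = col y.
Proof.
rewrite /partner; case: pickP => [x /andP[xR /eqP //]|none /col_coverR[x xR ex]].
by have := none x; rewrite xR ex eqxx.
Qed.

Lemma card_free_cells B k : B \in placements P k -> #|free_cells B| = #|R| - k.
Proof.
rewrite inE => /and3P[/subsetP sBP /eqP <- placedB].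
set used := [set x | [exists y in B, col y == col x]].
have usedE : R :&: used = partner @: B.
  apply/setP => x; rewrite !inE; apply/andP/imsetP => [[xR]|[y yB ->]].
    case/exists_inP => y yB /eqP exy; exists y => //.
    have [pR py] := partnerP (sBP y yB).
    by apply: col_injR; rewrite ?py.
  have [pR py] := partnerP (sBP y yB).
  by split=> //; apply/exists_inP; exists y; rewrite ?py.
have freeE : free_cells B = R :\: used.
  by apply/setP => x; rewrite !inE negb_exists_in andbC.
have card_used : #|R :&: used| = #|B|.
  rewrite usedE card_in_imset // => y z yB zB epz.
  apply: (rook_placement_col_inj placedB) => //.
  by rewrite -(partnerP (sBP y yB)).2 epz (partnerP (sBP z zB)).2.
by rewrite freeE -(cardsID used R) card_used addKn.
Qed.

Definition extensions k : {set {set T} * T} :=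
  [set p | (p.1 \in placements P k) && (p.2 \in free_cells p.1)].

Definition extend (p : {set T} * T) : {set T} := p.2 |: p.1.

Lemma card_extensions k : #|extensions k| = rook_number P k * (#|R| - k).
Proof.
rewrite -sum1_card.
rewrite (eq_bigl (fun p => (p.1 \in placements P k) && (p.2 \in free_cells p.1)));
  last by move=> p; rewrite inE.
rewrite -(pair_big_dep _ (fun B => mem (free_cells B)) (fun _ _ => 1)) /=.
rewrite (eq_bigr (fun _ => #|R| - k)) ?sum_nat_const // => B PB.
by rewrite sum1_card (card_free_cells PB).
Qed.

Lemma extension_placement k p : p \in extensions k ->
  extend p \in placements (P :|: R) k.+1 /\ ~~ (extend p \subset P).
Proof.
case: p => B x; rewrite !inE /extend /= => /andP[/and3P[sBP /eqP cardB placedB]].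
case/andP=> xR /forall_inP freex.
have xB : x \notin B by apply: contra (new_row_notin xR) => /(subsetP sBP).
split; last by rewrite subUset sub1set (negbTE (new_row_notin xR)).
rewrite subUset sub1set !inE xR orbT (subset_trans sBP (subsetUl _ _)) /=.
rewrite cardsU1 xB cardB eqxx /=; apply: rook_placementU (rook_placement1 _ _ _) placedB _.
move=> _ y /set1P-> yB; split; first by rewrite eq_sym freex.
exact: row_freshR (subsetP sBP y yB).
Qed.

Lemma extension_inj k : {in extensions k &, injective extend}.
Proof.
move=> [B x] [C y]; rewrite !inE /extend /= => /andP[/and3P[sBP _ _] /andP[xR _]].
move=> /andP[/and3P[sCP _ _] _] eBC.
have notin_x (A : {set T}) : A \subset P -> x \notin A.
  by move=> sAP; apply: contra (new_row_notin xR) => /(subsetP sAP).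
have exy : x = y.
  have /setU1P[//|xC] : x \in y |: C by rewrite -eBC setU11.
  by have := notin_x C sCP; rewrite xC.
subst y; congr pair.
by rewrite -(setU1K (notin_x B sBP)) eBC setU1K ?notin_x.
Qed.

Lemma placement_extension k (A : {set T}) :
    A \in placements (P :|: R) k.+1 -> ~~ (A \subset P) ->
  exists2 p, p \in extensions k & A = extend p.
Proof.
rewrite inE => /and3P[sAPR /eqP cardA /rook_placementP placedA].
case/subsetPn => x xA xP.
have xR : x \in R by move: (subsetP sAPR x xA); rewrite inE (negbTE xP).
exists (A :\ x, x); last by rewrite /extend /= setD1K.
rewrite !inE xR /=; apply/andP; split; last first.
  apply/forall_inP => y; rewrite !inE => /andP[nyx yA].
  by have [] := placedA y x yA xA nyx.
apply/and3P; split.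
- apply/subsetP => y; rewrite !inE => /andP[nyx yA].
  have /setUP[//|yR] := subsetP sAPR y yA.
  by have [_] := placedA y x yA xA nyx; rewrite (row_constR yR xR) eqxx.
- by rewrite (cardsD1 x A) xA add1n in cardA; case: cardA => ->.
- exact: rook_placementS (subsetDl _ _) (introT (rook_placementP _ _ _) placedA).
Qed.

Lemma rook_number_add_row k :
  rook_number (P :|: R) k.+1 = rook_number P k.+1 + (#|R| - k) * rook_number P k.
Proof.
rewrite /rook_number -(cardsID [set A : {set T} | A \subset P]); congr (_ + _).
  apply: eq_card => A; rewrite !inE; case: (boolP (A \subset P)) => sAP; rewrite ?andbF //=.
  by rewrite andbT (subset_trans sAP (subsetUl _ _)).
rewrite (_ : _ :\: _ = extend @: extensions k).
  by rewrite card_in_imset ?card_extensions 1?mulnC //; exact: extension_inj.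
apply/setP => A; rewrite !inE; apply/andP/imsetP => [[sAP PA]|[p ep ->]].
  by apply: placement_extension; rewrite ?inE.
by have [+ ->] := extension_placement ep; rewrite inE.
Qed.

End AddRow.

Section DisjointUnion.
Variables (T : finType) (U : eqType) (col row : T -> U) (P1 P2 : {set T}).
Hypothesis cross_free :
  forall x y, x \in P1 -> y \in P2 -> col x != col y /\ row x != row y.

Local Notation placements := (placements col row).
Local Notation rook_number := (rook_number col row).

Lemma notin_P2 x : x \in P1 -> x \notin P2.
Proof. by move=> xP1; apply/negP => /(cross_free xP1) []; rewrite eqxx. Qed.

Lemma setU_parts (A1 A2 : {set T}) : A1 \subset P1 -> A2 \subset P2 ->
  [/\ (A1 :|: A2) :&: P1 = A1, (A1 :|: A2) :&: P2 = A2 & #|A1 :|: A2| = #|A1| + #|A2|].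
Proof.
move=> /subsetP sA1 /subsetP sA2.
have A2P1 x : x \in A2 -> x \notin P1 by move/sA2; apply: contraL => /notin_P2.
have A1P2 x : x \in A1 -> x \notin P2 by move/sA1/notin_P2.
split.
- apply/setP => x; rewrite !inE; case: (boolP (x \in A1)) => [/sA1 -> //|_].
  by case: (boolP (x \in A2)) => // /A2P1 /negbTE.
- apply/setP => x; rewrite !inE.
  case: (boolP (x \in A2)) => [/sA2 ->|_]; first by rewrite orbT.
  by case: (boolP (x \in A1)) => // /A1P2 /negbTE.
- rewrite cardsU (_ : A1 :&: A2 = set0) ?cards0 ?subn0 //.
  by apply/setP => x; rewrite !inE; apply/andP => -[/A1P2/negP + /sA2].
Qed.

Lemma rook_numberU k :
  rook_number (P1 :|: P2) k = \sum_(j < k.+1) rook_number P1 j * rook_number P2 (k - j).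
Proof.
rewrite /rook_number -sum1_card.
rewrite (partition_big (fun A => inord #|A :&: P1| : 'I_k.+1) xpredT) //=.
apply: eq_bigr => j _; have le_jk : j <= k by rewrite -ltnS.
rewrite -cardsX -(@card_in_imset _ _ (fun p => p.1 :|: p.2)); last first.
  move=> [A1 A2] [B1 B2]; rewrite !inE /= => /andP[/and3P[sA1 _ _] /and3P[sA2 _ _]].
  move=> /andP[/and3P[sB1 _ _] /and3P[sB2 _ _]] eAB.
  have [eA1 eA2 _] := setU_parts sA1 sA2; have [eB1 eB2 _] := setU_parts sB1 sB2.
  by congr (_, _); [rewrite -eA1 -eB1 | rewrite -eA2 -eB2]; rewrite eAB.
rewrite -sum1_card; apply: eq_bigl => A; apply/andP/imsetP => [[]|[[A1 A2]]].
  rewrite inE => /and3P[sAP /eqP cardA placedA] /eqP ej.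
  have [eA1 eA2 cardU] := setU_parts (subsetIr A P1) (subsetIr A P2).
  have eA : (A :&: P1) :|: (A :&: P2) = A by rewrite -setIUr; apply/setIidPl.
  have cardA1 : #|A :&: P1| = j.
    by rewrite -ej inordK // ltnS -cardA subset_leq_card ?subsetIl.
  exists (A :&: P1, A :&: P2) => //.
  rewrite !inE !subsetIr !(rook_placementS (subsetIl _ _) placedA) cardA1 eqxx /=.
  have : #|A :&: P1| + #|A :&: P2| = k by rewrite -cardU eA.
  by rewrite cardA1 andbT => sum_k; apply/eqP; lia.
rewrite !inE /= => /andP[/and3P[sA1 /eqP cardA1 placed1] /and3P[sA2 /eqP cardA2 placed2]].
move=> ->.
have [eA1 _ cardU] := setU_parts sA1 sA2.
split; last by rewrite eA1 cardA1; apply/eqP/val_inj; rewrite /= inordK.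
rewrite setUSS //= cardU cardA1 cardA2 subnKC // eqxx /=.
apply: rook_placementU placed1 placed2 _ => x y xA1 yA2.
exact: cross_free (subsetP sA1 x xA1) (subsetP sA2 y yA2).
Qed.

End DisjointUnion.

Lemma stirling2_small n k : n < k -> stirling2 n k = 0.
Proof. by elim: n k => [|n IH] [|k] //= lt_nk; rewrite !IH ?muln0 // ltnW. Qed.

Lemma stirling2nn n : stirling2 n n = 1.
Proof. by elim: n => //= n ->; rewrite stirling2_small ?muln0. Qed.

(* The rook numbers of a Ferrers board whose rows t < n have t or t + 1 squares, h of
   them t + 1: by the factorization theorem their falling-factorial generating
   function is x^(n-h) (x+1)^h = sum_i C(h, i) x^(n-i). The guard is needed because
   n - k is truncated. *)
Definition stair_rook (n h k : nat) : nat :=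
  if k <= n then \sum_(i < n.+1) 'C(h, i) * stirling2 (n - i) (n - k) else 0.

Lemma stair_rook0 n h : stair_rook n h 0 = 1.
Proof.
rewrite /stair_rook big_ord_recl /= bin0 !subn0 stirling2nn big1 // => i _.
by rewrite stirling2_small ?muln0 //; have := ltn_ord i; rewrite /bump /=; lia.
Qed.

Lemma stair_rook_gt n h k : n < k -> stair_rook n h k = 0.
Proof. by rewrite /stair_rook ltnNge => /negbTE->. Qed.

Lemma stair_rook_short n h k : h <= n ->
  stair_rook n.+1 h k.+1 = stair_rook n h k.+1 + (n - k) * stair_rook n h k.
Proof.
move=> le_hn; rewrite /stair_rook !ltnS subSS.
case: (ltngtP k n) => [lt_kn|lt_nk|->]; last 2 first.
- by rewrite muln0.
- rewrite subnn mul0n big1 // => i _.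
  case: (ltnP i n.+1) => [le_in|lt_ni]; last by rewrite bin_small ?mul0n //; lia.
  by rewrite subSn //= muln0.
rewrite big_ord_recr /= bin_small ?mul0n ?addn0 ?ltnS //.
rewrite big_distrr -big_split /=; apply: eq_bigr => i _.
have le_in : i <= n by rewrite -ltnS.
rewrite subSn // (_ : n - k = (n - k.+1).+1) /=; last by lia.
by rewrite mulnDr mulnCA addnC.
Qed.

Lemma stair_rook_pascal n h k :
  stair_rook n.+1 h.+1 k.+1 = stair_rook n.+1 h k.+1 + stair_rook n h k.
Proof.
rewrite /stair_rook ltnS; case: leqP => // le_kn.
rewrite subSS big_ord_recl [X in _ = X + _]big_ord_recl !bin0 -addnA; congr (_ + _).
rewrite -big_split /=; apply: eq_bigr => i _.
by rewrite /bump /= add1n binS mulnDl subSS.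
Qed.

Lemma stair_rookS n h k (b : bool) : h <= n ->
  stair_rook n.+1 (h + b) k.+1 = stair_rook n h k.+1 + (n + b - k) * stair_rook n h k.
Proof.
move=> le_hn; case: b; rewrite ?addn0; last exact: stair_rook_short.
rewrite !addn1 stair_rook_pascal stair_rook_short // -addnA -mulSnr.
have [le_kn|lt_nk] := leqP k n; first by rewrite subSn.
by rewrite (stair_rook_gt h lt_nk) !muln0.
Qed.

Section StairBoard.
Variables (T : finType) (U : eqType) (col row : T -> U).
Variables (n : nat) (R : nat -> {set T}) (long : nat -> bool).
Hypothesis row_constR : forall t, t < n -> {in R t &, forall x y, row x = row y}.
Hypothesis col_injR : forall t, t < n -> {in R t &, injective col}.
Hypothesis rows_distinct :
  forall s t x y, s < t < n -> x \in R s -> y \in R t -> row x != row y.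
Hypothesis cols_nested :
  forall t y, t.+1 < n -> y \in R t -> exists2 x, x \in R t.+1 & col x = col y.
Hypothesis card_rows : forall t, t < n -> #|R t| = t + long t.

Lemma cols_nested_le s t y :
  s <= t < n -> y \in R s -> exists2 x, x \in R t & col x = col y.
Proof.
case/andP; elim: t => [|t IH]; first by rewrite leqn0 => /eqP-> _; exists y.
rewrite leq_eqVlt => /orP[/eqP-> _ yR|le_st lt_tn /(IH le_st (ltnW lt_tn))[x xR <-]].
  by exists y.
exact: cols_nested.
Qed.

Lemma rook_number_stair m k : m <= n ->
  rook_number col row (\bigcup_(t < m) R t) k = stair_rook m (count long (iota 0 m)) k.
Proof.
elim: m k => [|m IH] k le_mn.
  rewrite big_ord0 rook_number_set0.
  by case: k => [|k]; rewrite ?stair_rook0 ?stair_rook_gt.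
have -> : iota 0 m.+1 = rcons (iota 0 m) m by rewrite -cats1 -addn1 iotaD.
rewrite big_ord_recr /= -cats1 count_cat /= addn0.
case: k => [|k]; first by rewrite rook_number0 stair_rook0.
have row_fresh x y : x \in R m -> y \in \bigcup_(t < m) R t -> row x != row y.
  by move=> xR /bigcupP[t _ yR]; rewrite eq_sym (rows_distinct _ yR xR) // ltn_ord.
have col_cover y : y \in \bigcup_(t < m) R t -> exists2 x, x \in R m & col x = col y.
  by case/bigcupP => t _ yR; apply: cols_nested_le yR; rewrite le_mn andbT ltnW.
rewrite (rook_number_add_row (row_constR le_mn) (col_injR le_mn) row_fresh col_cover).
rewrite !IH ?(ltnW le_mn) // card_rows // stair_rookS //.
by rewrite -[m in _ <= m](size_iota 0) count_size.
Qed.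

End StairBoard.

Lemma card_ord_range n lo hi : hi <= n -> #|[set i : 'I_n | lo <= i < hi]| = hi - lo.
Proof.
move=> le_hn; rewrite -sum1_card (eq_bigl (fun i : 'I_n => lo <= i < hi)); last first.
  by move=> i; rewrite inE.
rewrite -(@big_ord_widen_cond _ 0 addn hi n (leq lo) (fun=> 1) le_hn).
by rewrite -(@big_geq_mkord _ 0 addn lo hi xpredT (fun=> 1)) sum_nat_const_nat muln1.
Qed.

Lemma count_parity_iota n c :
  count (fun t => odd t == c) (iota 0 n) = if c then n./2 else uphalf n.
Proof.
elim: n => [|n IH]; first by case: c.
by rewrite -addn1 iotaD count_cat IH /=; move: IH; case: c => _; lia.
Qed.

Section Bishops.
Variable m : nat.
Local Notation square := ('I_m * 'I_m)%type.
Local Notation bishop_number := (rook_number (@diff_coord m) (@sum_coord m)).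

Definition antidiag (s : nat) : {set square} := [set x : square | x.1 + x.2 == s].

Lemma card_antidiag s : #|antidiag s| = minn s.+1 m - (s.+1 - m).
Proof.
rewrite -(@card_in_imset _ _ fst) => [|[a1 b1] [a2 b2]]; last first.
  rewrite !inE /= => /eqP s1 /eqP s2 e12; subst a2.
  by congr pair; apply: ord_inj; lia.
rewrite -(@card_ord_range m (s.+1 - m) (minn s.+1 m)) ?geq_minr //.
apply: eq_card => a; rewrite inE.
apply/imsetP/idP => [[[a' b] + ->]|range].
  by rewrite inE /= => /eqP <-; have := ltn_ord b; have := ltn_ord a'; lia.
have lt_bm : s - a < m by lia.
by exists (a, Ordinal lt_bm) => //; rewrite inE /=; apply/eqP; lia.
Qed.

Definition colour (c : bool) : {set square} := [set x : square | odd (x.1 + x.2) == c].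

(* The anti-diagonals of colour c by nondecreasing length; for c = true the 0-th one,
   of index 2m - 1, is empty. *)
Definition colour_row (c : bool) (t : nat) : {set square} :=
  antidiag (if odd t == c then t else m + m - 1 - t).

Lemma card_colour_row c t : t < m -> #|colour_row c t| = t + (odd t == c).
Proof. by rewrite /colour_row card_antidiag; case: (odd t == c); lia. Qed.

Lemma bigcup_colour_row c : \bigcup_(t < m) colour_row c t = colour c.
Proof.
apply/setP => -[a b]; rewrite inE /=; have := ltn_ord a; have := ltn_ord b.
move=> lt_bm lt_am; apply/bigcupP/idP => [[t _]|/eqP par].
  have := ltn_ord t; rewrite inE /=.
  by case: ifP => par_t /eqP sum_ab lt_tm; apply/eqP; lia.
have [lt_sm|le_ms] := ltnP (a + b) m.
  by exists (Ordinal lt_sm) => //; rewrite inE /= par eqxx.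
have lt_tm : m + m - 1 - (a + b) < m by lia.
exists (Ordinal lt_tm) => //; rewrite inE /=.
have -> : (odd (m + m - 1 - (a + b)) == c) = false by lia.
by apply/eqP; lia.
Qed.

Lemma rook_number_colour c k :
  bishop_number (colour c) k = stair_rook m (if c then m./2 else uphalf m) k.
Proof.
rewrite -bigcup_colour_row -count_parity_iota.
apply: rook_number_stair (leqnn m) => [t _ x y|t _ [a1 b1] [a2 b2]|s t x y|t [a b]|t].
- by rewrite !inE => /eqP sx /eqP sy; rewrite /sum_coord; lia.
- rewrite !inE /diff_coord /= => /eqP s1 /eqP s2 e12.
  by congr pair; apply: ord_inj; lia.
- rewrite !inE /sum_coord => /andP[lt_st lt_tm].
  by case: ifP => _ /eqP sx; case: ifP => _ /eqP sy; apply/eqP; lia.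
- rewrite /colour_row !inE /= => lt_tm /eqP sum_ab.
  have := ltn_ord a; have := ltn_ord b => lt_bm lt_am.
  (* Reflect anti-diagonal t to 2m - 2 - t, or move 2m - 1 - t to t + 1, keeping a - b. *)
  case: (boolP (odd t == c)) => par in sum_ab *.
    exists (rev_ord b, rev_ord a); last by rewrite /diff_coord /=; lia.
    rewrite inE /=; have -> : (~~ odd t == c) = false by lia.
    by apply/eqP; lia.
  have lt_b' : m - b < m by lia.
  have lt_a' : m - a < m by lia.
  exists (Ordinal lt_b', Ordinal lt_a'); last by rewrite /diff_coord /=; lia.
  rewrite inE /=; have -> : (~~ odd t == c) = true by lia.
  by apply/eqP; lia.
- exact: card_colour_row.
Qed.

Lemma bishopsS_rook_number k : bishopsS m k = bishop_number [set: square] k.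
Proof. by apply: eq_card => A; rewrite !inE subsetT. Qed.

Lemma bishopsS_stair k :
  bishopsS m k = \sum_(j < k.+1) stair_rook m m./2 j * stair_rook m (uphalf m) (k - j).
Proof.
have colours : [set: square] = colour true :|: colour false.
  by apply/setP => x; rewrite !inE; case: odd.
rewrite bishopsS_rook_number colours rook_numberU => [|[a b] [c d]].
  by apply: eq_bigr => j _; rewrite !rook_number_colour.
rewrite !inE /diff_coord /sum_coord /= => /eqP odd_ab /eqP odd_cd.
by split; apply/eqP; lia.
Qed.

End Bishops.

Lemma stirling2Z_subn n i k : i <= n ->
  stirling2Z (n%:Z - i%:Z)%R (n%:Z - k%:Z)%R =
  if k <= n then stirling2 (n - i) (n - k) else 0.
Proof.
(* [stirling2Z] only reduces once its first argument is Posz 0 or Posz _.+1. *)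
move=> le_in; have -> : (n%:Z - i%:Z)%R = Posz (n - i) by lia.
have [le_kn|lt_nk] := leqP k n.
  have -> : (n%:Z - k%:Z)%R = Posz (n - k) by lia.
  by case: (n - i).
have -> : (n%:Z - k%:Z)%R = Negz (k - n).-1 by lia.
by case: (n - i).
Qed.

Lemma stair_rookE n h k : h <= n ->
  stair_rook n h k =
  \sum_(0 <= i < k.+1) 'C(h, i) * stirling2Z (n%:Z - i%:Z)%R (n%:Z - k%:Z)%R.
Proof.
move=> le_hn.
have termE i : 'C(h, i) * stirling2Z (n%:Z - i%:Z)%R (n%:Z - k%:Z)%R
               = 'C(h, i) * (if k <= n then stirling2 (n - i) (n - k) else 0).
  have [le_in|lt_ni] := leqP i n; first by rewrite stirling2Z_subn.
  by rewrite bin_small ?mul0n //; lia.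
rewrite (eq_bigr _ (fun i _ => termE i)) /stair_rook.
have [le_kn|lt_nk] := leqP k n; last by rewrite big1 // => i _; rewrite muln0.
rewrite -(big_mkord xpredT (fun i => 'C(h, i) * stirling2 (n - i) (n - k))).
rewrite (@big_cat_nat _ _ _ k.+1) //= [X in _ + X]big1_seq ?addn0 //.
move=> i /andP[_]; rewrite mem_index_iota => /andP[lt_ki lt_in].
by rewrite stirling2_small ?muln0 //; lia.
Qed.

Theorem theorem2p3 (m k : nat) :
  bishopsS m k =
  \sum_(0 <= j < k.+1) \sum_(0 <= i < j.+1)
     ('C(m./2, i) * stirling2Z (m%:Z - i%:Z)%R (m%:Z - j%:Z)%R *
      \sum_(0 <= l < (k - j).+1)
         'C(uphalf m, l) * stirling2Z (m%:Z - l%:Z)%R (m%:Z - k%:Z + j%:Z)%R)%N.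
Proof.
rewrite bishopsS_stair big_mkord; apply: eq_bigr => j _.
have le_jk : j <= k by rewrite -ltnS.
have -> : (m%:Z - k%:Z + j%:Z = m%:Z - (k - j)%:Z)%R by lia.
by rewrite -big_distrl -!stair_rookE //; lia.
Qed.
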